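(* Let $A$ be a commutative noetherian local ring, let $x,y\in A$ be an exact pair of zero divisors, and let $a\in A$. Then the sequence of free $A$-modules \[\boldsymbol{F}=\ \cdots\to A^2\xrightarrow{\gamma_a}A^2\xrightarrow{\eta_a}A^2\xrightarrow{\gamma_a}A^2\xrightarrow{\eta_a}\cdots\] is an exact complex. Moreover, with $\varphi=\begin{pmatrix}0&1\\-1&0\end{pmatrix}$ one has $\varphi\gamma_a^t=\eta_a\varphi$ and $\varphi\eta_a^t=\gamma_a\varphi$ (where ${}^t$ denotes transposition), so that $\varphi$ in each degree gives an isomorphism of complexes $\operatorname{Hom}_A(\boldsymbol{F},A)\xrightarrow{\cong}\boldsymbol{F}$, where $\operatorname{Hom}_A(A^2,A)$ is identified with $A^2$ so that the dual of a matrix is its transpose. In particular, $\operatorname{Hom}_A(\boldsymbol{F},A)$ is exact.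
   Context: Two non-units $x,y\in A$ form an exact pair of zero divisors if $\operatorname{Ann}_A(x)=(y)$ and $\operatorname{Ann}_A(y)=(x)$. For $a\in A$, $\gamma_a=\begin{pmatrix} x & a\\ 0 & y\end{pmatrix}$ and $\eta_a=\begin{pmatrix} y & -a\\ 0 & x\end{pmatrix}$, viewed as $A$-linear maps $A^2\to A^2$ acting on column vectors by left multiplication. *)

From HB Require Import structures.
From mathcomp Require Import all_boot all_order all_algebra.
Set Implicit Arguments. Unset Strict Implicit. Unset Printing Implicit Defensive.
Import GRing.Theory.
Local Open Scope ring_scope.

Section Defs.
Variable A : comUnitRingType.

Definition is_ideal (I : A -> Prop) : Prop :=
  [/\ I 0, (forall u v, I u -> I v -> I (u + v)) & (forall r u, I u -> I (r * u))].

Definition noetherian : Prop :=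
  forall I : A -> Prop, is_ideal I ->
    exists s : seq A, forall z, I z <->
      exists c : 'I_(size s) -> A, z = \sum_(i < size s) c i * s`_i.

Definition maximal_ideal (M : A -> Prop) : Prop :=
  is_ideal M /\ ~ M 1 /\
  forall J : A -> Prop, is_ideal J -> (forall z, M z -> J z) ->
    J 1 \/ (forall z, J z <-> M z).

Definition local_ring : Prop :=
  exists M, maximal_ideal M /\
    forall N, maximal_ideal N -> forall z, N z <-> M z.

Definition in_principal (y z : A) : Prop := exists c, z = c * y.

Definition ann_eq (x y : A) : Prop :=
  forall z, z * x = 0 <-> in_principal y z.

Definition exact_pair (x y : A) : Prop :=
  x \notin GRing.unit /\ y \notin GRing.unit /\ ann_eq x y /\ ann_eq y x.

Definition mx2 (p q r s : A) : 'M[A]_2 :=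
  \matrix_(i < 2, j < 2)
    (if i == 0 then (if j == 0 then p else q) else (if j == 0 then r else s)).

Definition gamma_mx (x y a : A) : 'M[A]_2 := mx2 x a 0 y.
Definition eta_mx (x y a : A) : 'M[A]_2 := mx2 y (- a) 0 x.
Definition phi : 'M[A]_2 := mx2 0 1 (-1) 0.

(* exactness at the middle of A^2 --g--> A^2 --f--> A^2 (maps act on column
   vectors by left multiplication): f o g = 0 and ker f = im g *)
Definition exact_at (g f : 'M[A]_2) : Prop :=
  f *m g = 0 /\
  forall v : 'cV[A]_2, f *m v = 0 -> exists w : 'cV[A]_2, v = g *m w.

End Defs.

(* The differentials alternate between [gamma_a] and [eta_a]; a cycle (v0, v1) of
   [eta_a] has [x v1 = 0], so [v1 = c y], and then [y (v0 - a c) = 0], so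
   [v0 - a c = d x]: it is the image of (d, c) under [gamma_a].  Swapping the
   roles of [x] and [y] (and replacing [a] by [-a]) exchanges [gamma_a] and [eta_a],
   which gives exactness in the other degree.  The dual complex has differentials
   [gamma_a^t = phi^-1 eta_a phi] and [eta_a^t = phi^-1 gamma_a phi], so it is
   conjugate to the shifted complex and hence exact as well. *)

From HB Require Import structures.
From mathcomp Require Import all_boot all_order all_algebra.
From mathcomp Require Import ring.

Set Implicit Arguments.
Unset Strict Implicit.
Unset Printing Implicit Defensive.
Import GRing.Theory.
Local Open Scope ring_scope.

Section TwoByTwo.
Variable R : comUnitRingType.

Definition cv2 (c d : R) : 'cV[R]_2 := \col_i (if i == 0 then c else d).

Lemma ord2P (i : 'I_2) : i = 0 \/ i = 1.
Proof. by case: i => [[|[|n]]] //= lt_i2; [left|right]; apply: val_inj. Qed.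

Lemma mx2E (M : 'M[R]_2) : M = mx2 (M 0 0) (M 0 1) (M 1 0) (M 1 1).
Proof.
by apply/matrixP => i j; rewrite mxE; case: (ord2P i) => ->; case: (ord2P j) => ->.
Qed.

Lemma cv2E (v : 'cV[R]_2) : v = cv2 (v 0 0) (v 1 0).
Proof.
by apply/matrixP => i j; rewrite mxE (ord1 j); case: (ord2P i) => ->.
Qed.

Lemma mx2_0 : mx2 0 0 0 0 = 0 :> 'M[R]_2.
Proof. by rewrite [RHS]mx2E !mxE. Qed.

Lemma cv2_eq0 (c d : R) : (cv2 c d = 0) <-> (c = 0 /\ d = 0).
Proof.
split=> [cd0 | [-> ->]]; last by rewrite [RHS]cv2E !mxE.
by split; [move: (congr1 (fun v : 'cV_2 => v 0 0) cd0)
          | move: (congr1 (fun v : 'cV_2 => v 1 0) cd0)]; rewrite !mxE.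
Qed.

Lemma tr_mx2 (p q r s : R) : (mx2 p q r s)^T = mx2 p r q s.
Proof. by rewrite [LHS]mx2E !mxE. Qed.

Lemma sum_ord2 (F : 'I_2 -> R) : \sum_(i < 2) F i = F 0 + F 1.
Proof. by rewrite big_ord_recr big_ord1 /=; congr (F _ + F _); apply: val_inj. Qed.

Lemma mul_mx2 (p q r s p' q' r' s' : R) :
  mx2 p q r s *m mx2 p' q' r' s' =
  mx2 (p * p' + q * r') (p * q' + q * s') (r * p' + s * r') (r * q' + s * s').
Proof. by rewrite [LHS]mx2E !mxE !sum_ord2 /mx2 !mxE. Qed.

Lemma mul_mx2_cv2 (p q r s c d : R) :
  mx2 p q r s *m cv2 c d = cv2 (p * c + q * d) (r * c + s * d).
Proof. by rewrite [LHS]cv2E !mxE !sum_ord2 /mx2 !mxE. Qed.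

Lemma phi_unitmx : phi R \in unitmx.
Proof.
apply: (proj1 (@mulmx1_unit _ _ _ (mx2 0 (-1) 1 0) _)).
by rewrite /phi mul_mx2 [RHS]mx2E !mxE /=; congr mx2; ring.
Qed.

End TwoByTwo.

Lemma eta_mx_swap (A : comUnitRingType) (x y a : A) :
  eta_mx y x (- a) = gamma_mx x y a.
Proof. by rewrite /eta_mx opprK. Qed.

Lemma gamma_mx_swap (A : comUnitRingType) (x y a : A) :
  gamma_mx y x (- a) = eta_mx x y a.
Proof. by []. Qed.

Lemma exact_at_conj (A : comUnitRingType) (P g f : 'M[A]_2) :
  P \in unitmx -> exact_at g f -> exact_at (invmx P *m g *m P) (invmx P *m f *m P).
Proof.
move=> Pu [fg0 kerf]; split.
  by rewrite !mulmxA (mulmxK Pu) -(mulmxA _ f) fg0 mulmx0 mul0mx.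
move=> v; rewrite -!mulmxA => fPv0.
have /kerf [w Pvw] : f *m (P *m v) = 0 by rewrite -(mulKVmx Pu (f *m _)) fPv0 mulmx0.
by exists (invmx P *m w); rewrite -!mulmxA (mulKVmx Pu) -Pvw (mulKmx Pu).
Qed.

Section ExactPair.
Variables (A : comUnitRingType) (x y a : A).
Hypotheses (ann_x : ann_eq x y) (ann_y : ann_eq y x).

Lemma exact_gamma_eta : exact_at (gamma_mx x y a) (eta_mx x y a).
Proof.
have yx0 : y * x = 0 by apply/ann_x; exists 1; rewrite mul1r.
split; first by rewrite mul_mx2 -mx2_0; congr mx2; ring: yx0.
move=> v; rewrite (cv2E v) mul_mx2_cv2 cv2_eq0 => -[etav0 etav1].
have [c v1E] : in_principal y (v 1 0) by apply/ann_x; rewrite mulrC -etav1; ring.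
have [d v0E] : in_principal x (v 0 0 - a * c).
  by apply/ann_y; rewrite mulrC -etav0 v1E; ring.
exists (cv2 d c); rewrite mul_mx2_cv2 -(subrK (a * c) (v 0 0)) v0E v1E.
by congr cv2; ring.
Qed.

End ExactPair.

Lemma phi_tr_gamma (A : comUnitRingType) (x y a : A) :
  phi A *m (gamma_mx x y a)^T = eta_mx x y a *m phi A.
Proof. by rewrite tr_mx2 !mul_mx2; congr mx2; ring. Qed.

Lemma tr_conj_phi (A : comUnitRingType) (M N : 'M[A]_2) :
  phi A *m M^T = N *m phi A -> M^T = invmx (phi A) *m N *m phi A.
Proof. by move=> phiM; rewrite -mulmxA -phiM (mulKmx (phi_unitmx A)). Qed.

Theorem lemma3p4 (A : comUnitRingType) (x y a : A) :
  noetherian A -> local_ring A -> exact_pair x y ->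
  (exact_at (gamma_mx x y a) (eta_mx x y a) /\ exact_at (eta_mx x y a) (gamma_mx x y a)) /\
  (phi A *m (gamma_mx x y a)^T = eta_mx x y a *m phi A /\
   phi A *m (eta_mx x y a)^T = gamma_mx x y a *m phi A /\
   phi A \in unitmx) /\
  (exact_at (gamma_mx x y a)^T (eta_mx x y a)^T /\ exact_at (eta_mx x y a)^T (gamma_mx x y a)^T).
Proof.
move=> _ _ [_ [_ [ann_x ann_y]]].
have exF := exact_gamma_eta a ann_x ann_y.
have exF' := exact_gamma_eta (- a) ann_y ann_x.
rewrite eta_mx_swap gamma_mx_swap in exF'.
have phi_gamma := phi_tr_gamma x y a.
have phi_eta := phi_tr_gamma y x (- a).
rewrite gamma_mx_swap eta_mx_swap in phi_eta.
split; first exact: (conj exF exF').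
split; first exact: (conj phi_gamma (conj phi_eta (phi_unitmx A))).
rewrite (tr_conj_phi phi_gamma) (tr_conj_phi phi_eta).
by split; apply: exact_at_conj (phi_unitmx A) _.
Qed.
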